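(* Let $c_1,\dots,c_{n-1}$ be free generators of a free $\mathbb Z$-module, put $c_0=-(c_1+\dots+c_{n-1})$, and set $c_i=c_{i'}$ whenever $i\equiv i'\pmod n$ ($i\in\mathbb Z$). For $i,j\in\mathbb Z$ let $c_{i,j}=c_{i-1}+c_{i-2}+\dots+c_{j'}$, where $j'\le i$ is an integer with $j'\equiv j\pmod n$. This does not depend on the choice of $j'$ since $c_0+\dots+c_{n-1}=0$; the sum is empty, hence $0$, if $j'=i$. Let $i_1,\dots,i_n$ be integers. Then the following are equivalent: 1. modulo $n$, the set $\{i_1,\dots,i_n\}$ coincides with $\{1,\dots,n\}$; 2. $\sum_{m=1}^nc_{i_m}=0$; 3. $\sum_{m=1}^nc_{i_m,m}=0$.
   Context: $n\ge3$ is a fixed integer. *)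

From HB Require Import structures.
From mathcomp Require Import all_boot all_order all_algebra.
Set Implicit Arguments. Unset Strict Implicit. Unset Printing Implicit Defensive.
Import Order.TTheory GRing.Theory Num.Theory.
Local Open Scope ring_scope.

(* The free Z-module with free generators c_1, ..., c_{n-1} is modelled as
   'rV[int]_(n.-1); c_k (1 <= k <= n-1) is the standard basis row vector with
   a 1 in position k-1. *)

Definition cnat (n : nat) (k : nat) : 'rV[int]_(n.-1) :=
  if k == 0%N then - \sum_(j < n.-1) \row_(l < n.-1) (l == j)%:Z
  else \row_(l < n.-1) (l.+1 == k)%:Z.

Definition cZ (n : nat) (i : int) : 'rV[int]_(n.-1) :=
  cnat n `|(i %% n%:Z)%Z|%N.

(* c_{i,j} = c_{i-1} + ... + c_{j'} with j' = i - ((i - j) mod n),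
   i.e. j' <= i, j' = j (mod n), j' > i - n (empty sum if j' = i). *)
Definition cij (n : nat) (i j : int) : 'rV[int]_(n.-1) :=
  let d := `|((i - j) %% n%:Z)%Z|%N in
  \sum_(t < d) cZ n (i - d%:Z + t%:Z).

From HB Require Import structures.
From mathcomp Require Import all_boot all_order all_algebra.
From mathcomp Require Import zify.
Import Order.TTheory GRing.Theory Num.Theory.
Local Open Scope ring_scope.
Set Implicit Arguments. Unset Strict Implicit.

(* Write [N = n + 1] for the modulus and [mu_k] for the number of indices [m]
   with [i_m = k (mod N)]; the [mu_k] add up to [N].
   - Since [c_1, ..., c_n] is a basis and [c_0 = -(c_1 + ... + c_n)],
     [sum_k w_k c_k] vanishes iff [w] is constant.  So condition 2,
     [sum_k mu_k c_k = 0], says that [mu] is constant, i.e. [mu = 1].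
   - Condition 1 says that every [mu_k] is positive, i.e. again [mu = 1].
   - With the prefix sums [F_k = c_0 + ... + c_(k-1)] one has
     [c_(i,j) = F_(i mod N) - F_(j mod N)], so condition 3 reads
     [sum_k (mu_k - 1) F_k = 0].  Summation by parts turns this into
     [sum_t B_t c_t = 0] with [B_t = sum_(k > t) (mu_k - 1)]; hence [B] is
     constant, and [B_n = 0] forces [mu = 1] once more. *)

Section Residues.

Variable n : nat.
Local Notation N := n.+1.

Definition resz (x : int) : nat := `|(x %% N%:Z)%Z|%N.

Lemma resz_lt x : (resz x < N)%N.
Proof. by rewrite -ltz_nat gez0_abs ?modz_ge0 ?(@ltz_mod x N%:Z). Qed.

Lemma modz_resz x : (x %% N%:Z)%Z = (resz x)%:Z.
Proof. by rewrite gez0_abs // modz_ge0. Qed.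

Lemma resz_nat k : (k < N)%N -> resz k%:Z = k.
Proof. by move=> lt_kN; rewrite /resz modz_nat absz_nat modn_small. Qed.

Variable i : 'I_N -> int.

Definition multiplicity (k : nat) : nat := #|[pred m | resz (i m) == k]|.

Definition each_residue_once := forall k, (k < N)%N -> multiplicity k = 1%N.

Lemma sum_resz (V : zmodType) (G : nat -> V) :
  \sum_(m < N) G (resz (i m)) = \sum_(k < N) G k *+ multiplicity k.
Proof.
rewrite (partition_big (fun m => inord (resz (i m)) : 'I_N) predT) //=.
apply: eq_bigr => k _; rewrite -sumr_const /multiplicity.
apply: eq_big => [m|m /eqP <-] /=; first by rewrite -val_eqE /= inordK ?resz_lt.
by rewrite inordK ?resz_lt.
Qed.

Lemma sum_multiplicity : (\sum_(k < N) multiplicity k)%N = N.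
Proof.
have := sum_resz (fun _ => 1 : int); rewrite sumr_const card_ord => sumN.
apply/eqP; rewrite -eqz_nat -natz -[X in _ == X]natz sumN natr_sum.
by apply/eqP; apply: eq_bigr.
Qed.

Lemma each_residue_once_pos :
  (forall k, (k < N)%N -> (0 < multiplicity k)%N) -> each_residue_once.
Proof.
move=> mult_gt0.
have : (\sum_(k < N) (multiplicity k - 1) + \sum_(k < N) 1
         = \sum_(k < N) multiplicity k)%N.
  by rewrite -big_split; apply: eq_bigr => k _ /=; rewrite subnK ?mult_gt0.
rewrite sum_multiplicity sum_nat_const card_ord muln1 -[X in _ = X]add0n.
move/addIn/eqP; rewrite sum_nat_eq0 => /forallP mult_le1 k lt_kN.
have /= := mult_le1 (Ordinal lt_kN); rewrite subn_eq0 => le_mult1.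
by apply/eqP; rewrite eqn_leq le_mult1 mult_gt0.
Qed.

Lemma each_residue_once_const :
  (forall k, (k < N)%N -> multiplicity k = multiplicity 0) -> each_residue_once.
Proof.
move=> mult_const k lt_kN; rewrite mult_const //.
have := sum_multiplicity; rewrite (eq_bigr (fun _ => multiplicity 0)) => [|k' _].
  rewrite sum_nat_const card_ord -[X in _ = X]muln1 => /eqP.
  by rewrite eqn_pmul2l // => /eqP.
exact: mult_const.
Qed.

Lemma each_residue_once_but0 :
  (forall k, (0 < k < N)%N -> multiplicity k = 1%N) -> each_residue_once.
Proof.
move=> mult1 [|k] lt_kN; last exact: mult1.
have := sum_multiplicity; rewrite big_ord_recl (eq_bigr (fun _ => 1%N)) => [|k' _].
  by rewrite sum_nat_const card_ord muln1 -[X in _ = X]add1n => /addIn.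
by apply: mult1; rewrite ltn_ord andbT.
Qed.

End Residues.

Section Generators.

Variable n : nat.
Local Notation N := n.+1.

Lemma cnat_comb_coord (w : nat -> int) (l : 'I_n) :
  (\sum_(k < N) w k *: cnat N k) 0 l = w l.+1 - w 0.
Proof.
rewrite summxE big_ord_recl /cnat /= !mxE summxE.
under eq_bigr do rewrite !mxE /bump /= add1n eqSS val_eqE.
under [X in _ * - X]eq_bigr do rewrite mxE.
rewrite (bigD1 l) //= eqxx big1 => [|j]; last first.
  by rewrite eq_sym => /negbTE ->.
rewrite (bigD1 l) //= eqxx big1 => [|j]; last first.
  by rewrite eq_sym => /negbTE ->; rewrite mulr0.
by rewrite mulr1 !addr0 mulrN1 addrC.
Qed.

Lemma cnat_comb_eq0 (w : nat -> int) :
  \sum_(k < N) w k *: cnat N k = 0 <-> forall l : 'I_n, w l.+1 = w 0.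
Proof.
split=> [comb0 l|w_const].
  by apply/eqP; rewrite -subr_eq0 -cnat_comb_coord comb0 mxE.
by apply/rowP => l; rewrite cnat_comb_coord w_const subrr mxE.
Qed.

Definition cprefix (k : nat) : 'rV[int]_n := \sum_(t < k) cnat N t.

Definition cprefixZ (x : int) := cprefix (resz n x).

Lemma cprefix_full : cprefix N = 0.
Proof.
rewrite /cprefix (eq_bigr (fun t : 'I_N => (fun _ => 1) t *: cnat N t)) => [|t _].
  exact/(cnat_comb_eq0 (fun _ => 1)).
by rewrite scale1r.
Qed.

Lemma cprefixZ_succ x : cprefixZ (x + 1) - cprefixZ x = cZ N x.
Proof.
rewrite /cprefixZ /cZ -/(resz n x).
have lt_rN := resz_lt n x.
have -> : resz n (x + 1) = ((resz n x).+1 %% N)%N.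
  apply/eqP; rewrite -eqz_nat -(modz_resz n (x + 1)) -modz_nat -[(resz n x).+1]addn1.
  by rewrite PoszD -(modz_resz n x) modzDml.
have [lt_r1N | le_Nr1] := ltnP (resz n x).+1 N.
  by rewrite modn_small // /cprefix big_ord_recr /= addrAC subrr add0r.
have -> : resz n x = n by apply/eqP; rewrite eqn_leq -ltnS lt_rN.
have /eqP := cprefix_full; rewrite /cprefix big_ord_recr /= addr_eq0 => /eqP ->.
by rewrite modnn big_ord0 sub0r opprK.
Qed.

Lemma sum_cZ_range (y : int) d :
  \sum_(t < d) cZ N (y + t%:Z) = cprefixZ (y + d%:Z) - cprefixZ y.
Proof.
elim: d => [|d IHd]; first by rewrite big_ord0 addr0 subrr.
rewrite big_ord_recr /= IHd -cprefixZ_succ addrC addrA subrK.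
by rewrite -[d.+1]addn1 PoszD addrA.
Qed.

Lemma cij_cprefix (x y : int) : cij N x y = cprefixZ x - cprefixZ y.
Proof.
rewrite /cij sum_cZ_range subrK /cprefixZ -/(resz n (x - y)).
have -> : x - (resz n (x - y))%:Z = ((x - y) %/ N%:Z)%Z * N%:Z + y.
  rewrite -modz_resz; have := divz_eq (x - y) N%:Z.
  by set q := ((x - y) %/ N%:Z)%Z; set r := ((x - y) %% N%:Z)%Z; lia.
by rewrite /resz modzMDl.
Qed.

Definition tail_sum (b : nat -> int) (t : nat) := \sum_(k < N | (t < k)%N) b k.

Lemma sum_cprefix_by_parts (b : nat -> int) :
  \sum_(k < N) b k *: cprefix k = \sum_(t < N) tail_sum b t *: cnat N t.
Proof.
have cprefixE (k : 'I_N) : cprefix k = \sum_(t < N | (t < k)%N) cnat N t.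
  by rewrite /cprefix (big_ord_widen N (cnat N)) // ltnW.
under eq_bigr do rewrite cprefixE scaler_sumr big_mkcond.
rewrite exchange_big; apply: eq_bigr => t _.
rewrite scaler_suml [RHS]big_mkcond; apply: eq_bigr => k _.
by case: ifP.
Qed.

Lemma tail_sumS (b : nat -> int) t :
  (t.+1 < N)%N -> tail_sum b t = b t.+1 + tail_sum b t.+1.
Proof.
move=> lt_t1N; rewrite /tail_sum (bigD1 (Ordinal lt_t1N)) //=; congr (_ + _).
by apply: eq_bigl => k; rewrite -val_eqE /= [(t.+1 < k)%N]ltn_neqAle eq_sym andbC.
Qed.

Lemma tail_sum_last (b : nat -> int) : tail_sum b n = 0.
Proof. by rewrite /tail_sum big_pred0 // => k; rewrite ltnNge -ltnS ltn_ord. Qed.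

Variable i : 'I_N -> int.
Local Notation multiplicity := (multiplicity i).

Lemma sum_cZ_multiplicity :
  \sum_(m < N) cZ N (i m) = \sum_(k < N) (multiplicity k)%:Z *: cnat N k.
Proof.
by rewrite (sum_resz i (cnat N)); apply: eq_bigr => k _; rewrite -scaler_nat natz.
Qed.

Lemma sum_cij_multiplicity :
  \sum_(m < N) cij N (i m) (m.+1)%:Z
  = \sum_(k < N) ((multiplicity k)%:Z - 1) *: cprefix k.
Proof.
under eq_bigr do rewrite cij_cprefix.
have cprefix_sum : \sum_(m < N) cprefixZ (m.+1)%:Z = \sum_(k < N) cprefix k.
  rewrite big_ord_recr big_ord_recl /= addrC; congr (_ + _).
    by rewrite /cprefixZ /resz modzz.
  by apply: eq_bigr => m _; rewrite /cprefixZ resz_nat // ltnS.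
rewrite sumrB cprefix_sum (sum_resz i cprefix) -sumrB.
by apply: eq_bigr => k _; rewrite scalerBl scale1r -natz scaler_nat.
Qed.

Lemma mem_shifted_residues (x : int) :
  (x \in [seq ((m.+1)%:Z %% N%:Z)%Z | m : 'I_N]) = (0 <= x) && (x < N%:Z).
Proof.
apply/mapP/andP => [[m _ ->]|[x_ge0 x_lt]].
  by rewrite modz_ge0 // (@ltz_mod _ N%:Z).
have xE : x = `|x|%N%:Z by rewrite gez0_abs.
have [->|x_neq0] := eqVneq x 0; first by exists ord_max; rewrite ?mem_enum //= modzz.
have lt_xN : (`|x|.-1 < N)%N by move: x_lt; rewrite xE ltz_nat; lia.
exists (Ordinal lt_xN); rewrite ?mem_enum //= prednK ?absz_gt0 // -xE.
by rewrite modz_small // x_ge0 x_lt.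
Qed.

Lemma residues_eq_iff_once :
  ([seq (i m %% N%:Z)%Z | m : 'I_N] =i [seq ((m.+1)%:Z %% N%:Z)%Z | m : 'I_N])
  <-> each_residue_once i.
Proof.
split=> [eq_res|once x].
  apply: each_residue_once_pos => k lt_kN.
  have : k%:Z \in [seq (i m %% N%:Z)%Z | m : 'I_N].
    by rewrite eq_res mem_shifted_residues /= ltz_nat.
  by case/mapP=> m _ kE; apply/card_gt0P; exists m; rewrite inE /resz -kE.
rewrite mem_shifted_residues; apply/mapP/andP => [[m _ ->]|[x_ge0 x_lt]].
  by rewrite modz_ge0 // (@ltz_mod _ N%:Z).
have xE : x = `|x|%N%:Z by rewrite gez0_abs.
have lt_xN : (`|x| < N)%N by rewrite -ltz_nat -xE.
have /card_gt0P[m] : (0 < multiplicity `|x|)%N by rewrite once.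
by rewrite inE /= => /eqP mE; exists m; rewrite ?mem_enum // modz_resz mE -xE.
Qed.

Lemma sum_cZ_eq0_iff_once : \sum_(m < N) cZ N (i m) = 0 <-> each_residue_once i.
Proof.
rewrite sum_cZ_multiplicity; set w := fun k => (multiplicity k)%:Z.
split=> [/(cnat_comb_eq0 w) mult_const | once].
  apply: each_residue_once_const => -[|k] // lt_kN.
  by have /eqP := mult_const (Ordinal (lt_kN : (k < n)%N)); rewrite eqz_nat => /eqP.
by apply/(cnat_comb_eq0 w) => l; rewrite /w !once // ltnS.
Qed.

Lemma sum_cij_eq0_iff_once : (0 < n)%N ->
  \sum_(m < N) cij N (i m) (m.+1)%:Z = 0 <-> each_residue_once i.
Proof.
move=> n_gt0; set b := fun k => (multiplicity k)%:Z - 1.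
rewrite sum_cij_multiplicity (sum_cprefix_by_parts b).
split=> [/(cnat_comb_eq0 (tail_sum b)) tail_const | once]; last first.
  apply/(cnat_comb_eq0 (tail_sum b)) => l.
  by rewrite /tail_sum !big1 // => k _; rewrite /b once ?subrr.
have tail_at0 : tail_sum b 0 = 0.
  have lt_n1n : (n.-1 < n)%N by rewrite ltn_predL.
  by rewrite -(tail_const (Ordinal lt_n1n)) /= prednK // tail_sum_last.
have tail0 t : (t < N)%N -> tail_sum b t = 0.
  case: t => [|t] // lt_tN.
  by rewrite (tail_const (Ordinal (lt_tN : (t < n)%N))).
apply: each_residue_once_but0 => -[|k] // /andP[_ lt_kN].
have := tail_sumS b lt_kN; rewrite !tail0 ?(ltnW lt_kN) // addr0 => /esym/eqP.
by rewrite subr_eq0 => /eqP [].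
Qed.

End Generators.

Theorem mainTheorem8 (n : nat) (hn : (3 <= n)%N) (i : 'I_n -> int) :
  ( ([seq (i m %% n%:Z)%Z | m : 'I_n] =i [seq ((m.+1)%:Z %% n%:Z)%Z | m : 'I_n])
    <-> \sum_(m < n) cZ n (i m) = 0 )
  /\
  ( \sum_(m < n) cZ n (i m) = 0
    <-> \sum_(m < n) cij n (i m) (m.+1)%:Z = 0 ).
Proof.
case: n hn i => [|n] // hn i.
rewrite residues_eq_iff_once sum_cZ_eq0_iff_once sum_cij_eq0_iff_once; last exact: ltnW.
by split.
Qed.
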